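(* For every $w\in A^*$, $$\Big\|\big(d_\ell(\hat p_{n,\ell}(\cdot|w),\bar p_{n,\ell}(\cdot|w))\big)_{\ell=1}^{L}\Big\|_{L,k}\;\le\;\big\|(\mathrm{conf}_\ell(w))_{\ell=1}^{L}\big\|_{L,r}.$$
   Context: Setting: $A$ is a finite alphabet, $A^*$ the set of finite and left-infinite $A$-valued strings; for $w,w'\in A^*$, $w\preceq w'$ means $w$ is a suffix of $w'$. There are $L$ stationary processes $X(\ell)$, $\ell=1,\dots,L$, with $p_\ell(a\mid x)=\Pr(X(\ell)_0=a\mid X(\ell)^{-1}_{-\infty}=x)$, and for each $\ell$ we observe a sample $X_1^n(\ell)$. $N_{k,\ell}(w)$ is the number of occurrences of $w$ in $X_1^k(\ell)$. If $\min_{1\le\ell\le L}N_{n-1,\ell}(w)>0$, the empirical probability is $\hat p_{n,\ell}(a|w)=N_{n,\ell}(wa)/N_{n-1,\ell}(w)$ and the oracle probability is $\bar p_{n,\ell}(a|w)=\frac{1}{N_{n-1,\ell}(w)}\sum_{i=|w|+1}^{n}\mathbf 1\{X^{i-1}_{i-|w|}(\ell)=w\}\,p_\ell(a|X^{i-1}_{-\infty}(\ell))$; otherwise both are set to $1/|A|$. Each $d_\ell:\Delta^A\times\Delta^A\to[0,1]$ is a metric on probability distributions over $A$. For $v\in\mathbb R^L$ and $q\ge1$, $\|v\|_{L,q}=(\frac1L\sum_{\ell=1}^L|v_\ell|^q)^{1/q}$ (and $\|v\|_{L,\infty}=\max_\ell|v_\ell|$). A confidence radius $\mathrm{conf}(w)=(\mathrm{conf}_1(w),\dots,\mathrm{conf}_L(w))$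 with $0\le\mathrm{conf}_\ell(w)\le1$ is given for each $w$, componentwise increasing ($\mathrm{conf}_\ell(w)\le\mathrm{conf}_\ell(w')$ if $w\preceq w'$). The positive (extended) integers $k,r,m$ satisfy $k\le m$ and $r\ge km/(m-k)$, or $k\le r=m=\infty$. Assume the event $$\mathrm{Good}_m=\bigcap_{w\in A^*}\Big\{\Big\|\Big(\tfrac{d_\ell(\bar p_{n,\ell}(\cdot|w),\hat p_{n,\ell}(\cdot|w))}{\mathrm{conf}_\ell(w)}\Big)_{\ell=1}^L\Big\|_{L,m}\le1\ \text{ whenever }\min_{1\le\ell\le L}N_{n-1,\ell}(w)>0\Big\}$$ occurs. *)

From mathcomp Require Import all_boot all_order all_algebra.
From mathcomp Require Import reals exp.
Set Implicit Arguments. Unset Strict Implicit. Unset Printing Implicit Defensive.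
Import Order.TTheory GRing.Theory Num.Theory.
Local Open Scope ring_scope.

(* inl s : finite string s = [:: w_1; ...; w_j] (w_j is the most recent letter).
   inr x : left-infinite string ... x 2 x 1 x 0  (x 0 is the most recent letter). *)
Definition str (A : finType) := (seq A + (nat -> A))%type.

Definition str_suffix (A : finType) (w w' : str A) : Prop :=
  match w, w' with
  | inl s, inl s' => suffix s s'
  | inl s, inr x => forall i, (i < size s)%N -> nth (x 0%N) s (size s - 1 - i) = x i
  | inr _, inl _ => False
  | inr x, inr y => forall i, x i = y i
  end.

Definition str_app (A : finType) (w : str A) (a : A) : str A :=
  match w with
  | inl s => inl (rcons s a)
  | inr x => inr (fun j => if j is j'.+1 then x j' else a)
  end.

Definition occurs (A : finType) (X : int -> A) (s : seq A) (t : int) : bool :=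
  map (fun j : nat => X (t - (size s)%:Z + 1 + j%:Z)) (iota 0 (size s)) == s.

(* N_k(w): number of occurrences of w in X_1^k, i.e. number of end times t
   with |w| <= t <= k (so that the occurrence lies within positions 1..k).
   A left-infinite string never occurs in a finite sample. *)
Definition Ncount (A : finType) (X : int -> A) (k : nat) (w : str A) : nat :=
  match w with
  | inl s => count (fun t : nat => occurs X s t%:Z) (index_iota (size s) k.+1)
  | inr _ => 0%N
  end.

Definition allpos (A : finType) (L : nat) (X : 'I_L -> int -> A) (n : nat)
  (w : str A) : bool :=
  [forall l, (0 < Ncount (X l) n.-1 w)%N].

Definition past (A : finType) (X : int -> A) (t : int) : nat -> A :=
  fun j => X (t - j%:Z).

Section Estimators.
Variables (R : realType) (A : finType) (L : nat).

Definition unif : {ffun A -> R} := [ffun => (#|A|%:R)^-1].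

Definition phat (X : 'I_L -> int -> A) (n : nat) (w : str A) (l : 'I_L)
  : {ffun A -> R} :=
  if allpos X n w then
    [ffun a => (Ncount (X l) n (str_app w a))%:R / (Ncount (X l) n.-1 w)%:R]
  else unif.

(* oracle probability \bar p_{n,l}(.|w);  p l x a = p_l(a | x) *)
Definition pbar (X : 'I_L -> int -> A) (p : 'I_L -> (nat -> A) -> A -> R)
  (n : nat) (w : str A) (l : 'I_L) : {ffun A -> R} :=
  if allpos X n w then
    match w with
    | inl s =>
      [ffun a => (Ncount (X l) n.-1 w)%:R^-1 *
         \sum_(size s + 1 <= i < n.+1)
            (occurs (X l) s (i%:Z - 1))%:R * p l (past (X l) (i%:Z - 1)) a]
    | inr _ => unif
    end
  else unif.

Definition is_distr (q : {ffun A -> R}) : Prop :=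
  (forall a, 0 <= q a) /\ \sum_a q a = 1.

Definition is_metric01 (d : {ffun A -> R} -> {ffun A -> R} -> R) : Prop :=
  (forall q1 q2, is_distr q1 -> is_distr q2 -> 0 <= d q1 q2 <= 1) /\
  (forall q1 q2, is_distr q1 -> is_distr q2 -> (d q1 q2 = 0 <-> q1 = q2)) /\
  (forall q1 q2, is_distr q1 -> is_distr q2 -> d q1 q2 = d q2 q1) /\
  (forall q1 q2 q3, is_distr q1 -> is_distr q2 -> is_distr q3 ->
      d q1 q3 <= d q1 q2 + d q2 q3).

End Estimators.

(* Some q = the integer q ; None = infinity *)
Definition ext_pos (q : option nat) : Prop :=
  match q with Some q => (0 < q)%N | None => True end.

Definition ext_le (q1 q2 : option nat) : Prop :=
  match q1, q2 with
  | Some a, Some b => (a <= b)%N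
  | _, None => True
  | None, Some _ => False
  end.

Definition ext_inv (R : realType) (q : option nat) : R :=
  match q with Some q => (q%:R)^-1 | None => 0 end.

(* "k <= m and r >= k m /(m - k), or k <= r = m = infinity",
   read as  k <= m  and  1/r <= 1/k - 1/m *)
Definition holder_exps (R : realType) (k r m : option nat) : Prop :=
  (ext_le k m /\ ext_inv R r <= ext_inv R k - ext_inv R m) \/
  (ext_le k r /\ r = None /\ m = None).

Definition Lnorm (R : realType) (L : nat) (q : option nat) (v : 'I_L -> R) : R :=
  match q with
  | Some q => powR ((L%:R)^-1 * \sum_(l < L) `|v l| ^+ q) ((q%:R)^-1)
  | None => \big[Num.max/0]_(l < L) `|v l|
  end.

(* The ratio d/conf is read
   with the conventions 0/0 = 0 and d/0 = +oo for d > 0: hence we require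
   d = 0 wherever conf = 0, and the norm is taken with x/0 = 0. *)
Definition Good (R : realType) (A : finType) (L : nat)
  (X : 'I_L -> int -> A) (p : 'I_L -> (nat -> A) -> A -> R)
  (d : 'I_L -> {ffun A -> R} -> {ffun A -> R} -> R)
  (conf : str A -> 'I_L -> R) (n : nat) (m : option nat) : Prop :=
  forall w : str A, allpos X n w ->
    (forall l, conf w l = 0 -> d l (pbar X p n w l) (phat R X n w l) = 0) /\
    Lnorm m (fun l => d l (pbar X p n w l) (phat R X n w l) / conf w l) <= 1.

From mathcomp Require Import all_boot all_order all_algebra.
From mathcomp Require Import reals exp.
From mathcomp Require Import ring.
Set Implicit Arguments. Unset Strict Implicit. Unset Printing Implicit Defensive.
Import Order.TTheory GRing.Theory Num.Theory.
Local Open Scope ring_scope.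

(* Write D l for the distance between the two estimators.  Where conf w l > 0,
   D l = e l * conf w l with e l = D l / conf w l, and Good says ||e||_{L,m} <= 1;
   where conf w l = 0, Good forces D l = 0.  The claim is then Hoelder's
   inequality for normalized norms, ||e c||_k <= ||e||_m ||c||_r whenever
   1/k >= 1/m + 1/r.  After normalizing e and c, Hoelder reduces to the weighted
   AM-GM inequality x^a y^b <= a x + b y + (1 - a - b) for a + b <= 1; the cases
   with an infinite exponent follow from ||e c||_k <= ||e||_k max|c| and the
   monotonicity of normalized norms in the exponent.  When some sample has no
   occurrence of w, both estimators are uniform and D = 0. *)

Section PowR.
Variable R : realType.
Implicit Types x y a b p : R.

Lemma powRKV x p : 0 <= x -> p != 0 -> (x `^ p) `^ p^-1 = x.
Proof. by move=> x0 p0; rewrite -powRrM mulfV // powRr1. Qed.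

Lemma powRVK x p : 0 <= x -> p != 0 -> (x `^ p^-1) `^ p = x.
Proof. by move=> x0 p0; rewrite -powRrM mulVf // powRr1. Qed.

Lemma powR_divK x p q : p != 0 -> (x `^ p) `^ (q / p) = x `^ q.
Proof. by move=> p0; rewrite -powRrM mulrC divfK. Qed.

Lemma powRdivE x a b : x `^ (a / b) = (x `^ b^-1) `^ a.
Proof. by rewrite -powRrM mulrC. Qed.

Lemma ler_powRV x y p : 0 < p -> 0 <= x -> 0 <= y -> x <= y `^ p -> x `^ p^-1 <= y.
Proof.
move=> p0 x0 y0 xy; rewrite -(powRVK y0 (invr_neq0 (lt0r_neq0 p0))) invrK.
have pV0 : 0 <= p^-1 by rewrite invr_ge0 ltW.
exact: (ge0_ler_powR pV0 x0 (powR_ge0 y p) xy).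
Qed.

Lemma amgm_powR x y a b : 0 <= x -> 0 <= y -> 0 < a -> 0 < b -> a + b = 1 ->
  x `^ a * y `^ b <= a * x + b * y.
Proof.
move=> x0 y0 a0 b0 ab.
have := @conjugate_powR R (x `^ a) (y `^ b) a^-1 b^-1 (powR_ge0 _ _) (powR_ge0 _ _).
rewrite !invr_gt0 a0 b0 !invrK => /(_ erefl erefl ab).
by rewrite !powRKV ?gt_eqF // ![_ * a]mulrC ![_ * b]mulrC.
Qed.

Lemma amgm_powR_le1 x y a b : 0 <= x -> 0 <= y -> 0 < a -> 0 < b -> a + b <= 1 ->
  x `^ a * y `^ b <= a * x + b * y + (1 - a - b).
Proof.
move=> x0 y0 a0 b0; rewrite le_eqVlt => /predU1P[ab|ab].
  by rewrite -[1 - a - b]addrA -opprD ab subrr addr0 amgm_powR.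
set s := a + b; have s0 : 0 < s by rewrite addr_gt0.
have s1 : 0 < 1 - s by rewrite subr_gt0.
(* Young for [z ^ 1/s] and [1] with weights [s] and [1 - s], then AM-GM for [z ^ 1/s]. *)
set z := x `^ a * y `^ b.
have z_le : z <= s * z `^ s^-1 + (1 - s).
  have z0 : 0 <= z by rewrite mulr_ge0 ?powR_ge0.
  have := @conjugate_powR R z 1 s^-1 (1 - s)^-1 z0 ler01.
  rewrite !invr_gt0 s0 s1 !invrK addrC subrK => /(_ erefl erefl erefl).
  by rewrite powR1 mulr1 mul1r mulrC.
have zE : z `^ s^-1 = x `^ (a / s) * y `^ (b / s).
  by rewrite powRM ?powR_ge0 // -!powRrM.
have amgm_s : z `^ s^-1 <= a / s * x + b / s * y.
  by rewrite zE amgm_powR ?divr_gt0 // -mulrDl mulfV ?gt_eqF.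
apply: (le_trans z_le); rewrite -[1 - a - b]addrA -opprD -/s lerD2r.
apply: le_trans (ler_wpM2l (ltW s0) amgm_s) _.
by rewrite mulrDr !mulrA ![s * _]mulrC !mulfK ?gt_eqF.
Qed.

End PowR.

Section Mean.
Variables (R : realType) (L : nat).
Hypothesis L_gt0 : (0 < L)%N.
Implicit Types (f g u v : 'I_L -> R) (a : R).

Definition mean f := L%:R^-1 * \sum_l f l.

Lemma eq_mean f g : f =1 g -> mean f = mean g.
Proof. by move=> fg; rewrite /mean (eq_bigr _ (fun l _ => fg l)). Qed.

Lemma mean_ge0 f : (forall l, 0 <= f l) -> 0 <= mean f.
Proof. by move=> f0; rewrite mulr_ge0 ?invr_ge0 ?ler0n ?sumr_ge0. Qed.

Lemma ler_mean f g : (forall l, f l <= g l) -> mean f <= mean g.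
Proof. by move=> fg; rewrite ler_wpM2l ?invr_ge0 ?ler0n ?ler_sum. Qed.

Lemma meanD f g : mean (fun l => f l + g l) = mean f + mean g.
Proof. by rewrite /mean big_split mulrDr. Qed.

Lemma meanZ a f : mean (fun l => a * f l) = a * mean f.
Proof. by rewrite /mean -mulr_sumr mulrCA. Qed.

Lemma mean_cst a : mean (fun=> a) = a.
Proof.
rewrite /mean sumr_const card_ord -[a *+ L]mulr_natl mulrA.
by rewrite mulVf ?mul1r ?pnatr_eq0 -?lt0n.
Qed.

Lemma mean_eq0 f : (forall l, 0 <= f l) -> mean f = 0 -> forall l, f l = 0.
Proof.
move=> f0 /eqP; rewrite mulf_eq0 invr_eq0 pnatr_eq0 eqn0Ngt L_gt0 => /eqP sum0 l.
exact: (psumr_eq0P (fun i _ => f0 i) sum0).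
Qed.

Lemma holder_mean u v s p q : (forall l, 0 <= u l) -> (forall l, 0 <= v l) ->
  0 < s -> 0 < p -> 0 < q -> s / p + s / q <= 1 ->
  mean (fun l => u l `^ s * v l `^ s) <=
  mean (fun l => u l `^ p) `^ (s / p) * mean (fun l => v l `^ q) `^ (s / q).
Proof.
move=> u0 v0 s0 p0 q0 spq.
set U := mean (fun l => u l `^ p); set V := mean (fun l => v l `^ q).
set a := s / p; set b := s / q.
have [a0 b0] : 0 < a /\ 0 < b by split; apply: divr_gt0.
have U0 : 0 <= U by apply: mean_ge0 => l; apply: powR_ge0.
have V0 : 0 <= V by apply: mean_ge0 => l; apply: powR_ge0.
have UV0 : 0 <= U `^ a * V `^ b by rewrite mulr_ge0 ?powR_ge0.
have mean_mul0 : (forall l, u l `^ s * v l `^ s = 0) ->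
    mean (fun l => u l `^ s * v l `^ s) <= U `^ a * V `^ b.
  by move=> uv0; rewrite (eq_mean uv0) mean_cst.
have [/(mean_eq0 (fun l => powR_ge0 _ _)) u_eq0|U_neq0] := eqVneq U 0.
  by apply: mean_mul0 => l; rewrite (powR_eq0_eq0 (u_eq0 l)) powR0 ?mul0r ?gt_eqF.
have [/(mean_eq0 (fun l => powR_ge0 _ _)) v_eq0|V_neq0] := eqVneq V 0.
  by apply: mean_mul0 => l; rewrite (powR_eq0_eq0 (v_eq0 l)) powR0 ?mulr0 ?gt_eqF.
pose x l := U^-1 * u l `^ p; pose y l := V^-1 * v l `^ q.
have x0 l : 0 <= x l by rewrite mulr_ge0 ?invr_ge0 ?powR_ge0.
have y0 l : 0 <= y l by rewrite mulr_ge0 ?invr_ge0 ?powR_ge0.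
have mean_x : mean x = 1 by rewrite meanZ mulVf.
have mean_y : mean y = 1 by rewrite meanZ mulVf.
have ux l : u l `^ s = U `^ a * x l `^ a.
  by rewrite -powRM // /x mulVKf // powR_divK ?gt_eqF.
have vy l : v l `^ s = V `^ b * y l `^ b.
  by rewrite -powRM // /y mulVKf // powR_divK ?gt_eqF.
pose amgm l := U `^ a * V `^ b * (a * x l + b * y l + (1 - a - b)).
apply: (@le_trans _ _ (mean amgm)).
  apply: ler_mean => l; rewrite ux vy mulrACA ler_wpM2l //.
  exact: amgm_powR_le1.
rewrite meanZ !meanD (meanZ a x) (meanZ b y) mean_x mean_y !mean_cst !mulr1.
by rewrite -[1 - a - b]addrA -opprD subrKC mulr1.
Qed.

Lemma power_mean_le u s q : (forall l, 0 <= u l) -> 0 < s -> s <= q ->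
  mean (fun l => u l `^ s) <= mean (fun l => u l `^ q) `^ (s / q).
Proof.
move=> u0 s0; rewrite le_eqVlt => /predU1P[<-|sq].
  by rewrite divff ?gt_eqF // powRr1 //; apply: mean_ge0 => l; apply: powR_ge0.
have q0 : 0 < q := lt_trans s0 sq.
have sq1 : 0 < 1 - s / q by rewrite subr_gt0 ltr_pdivrMr // mul1r.
(* [t] is chosen so that [s / q + s / t = 1]. *)
pose t := s / (1 - s / q).
have t0 : 0 < t by rewrite divr_gt0.
have st : s / t = 1 - s / q by rewrite /t invf_div mulrCA mulfV ?mulr1 ?gt_eqF.
have := @holder_mean u (fun=> 1) s q t u0 (fun=> ler01) s0 q0 t0.
rewrite st addrC subrK lexx => /(_ isT).
have u1E l : u l `^ s * 1 `^ s = u l `^ s by rewrite powR1 mulr1.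
by rewrite (eq_mean u1E) powR1 mean_cst powR1 mulr1.
Qed.

End Mean.

Section NormalizedNorm.
Variables (R : realType) (L : nat).
Hypothesis L_gt0 : (0 < L)%N.
Implicit Types (f g u v : 'I_L -> R) (q k r m : option nat).

Lemma Lnorm_finE (q : nat) f :
  Lnorm (Some q) f = mean (fun l => `|f l| `^ q%:R) `^ q%:R^-1.
Proof.
rewrite /= /mean; congr (_ `^ _); congr (_ * _).
by apply: eq_bigr => l _; rewrite powR_mulrn.
Qed.

Lemma Lnorm_ge0 q f : 0 <= Lnorm q f.
Proof. by case: q => [q|] /=; [exact: powR_ge0 | exact: bigmax_ge_id]. Qed.

Lemma eq_Lnorm q f g : f =1 g -> Lnorm q f = Lnorm q g.
Proof. by move=> fg; case: q => [q|] /=; under eq_bigr do rewrite fg. Qed.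

Lemma Lnorm0 q : ext_pos q -> Lnorm q (fun _ : 'I_L => 0 : R) = 0.
Proof.
case: q => [q|] /= q_gt0; last first.
  by elim/big_rec: _ => // l x _ ->; rewrite normr0 maxxx.
rewrite big1 => [|l _]; last by rewrite normr0 expr0n gtn_eqF.
by rewrite mulr0 powR0 // invr_eq0 pnatr_eq0 gtn_eqF.
Qed.

Lemma Lnorm_le_max q f : ext_pos q -> Lnorm q f <= Lnorm None f.
Proof.
case: q => [q|] // q_gt0; set M := Lnorm None f.
rewrite Lnorm_finE; apply: ler_powRV; rewrite ?ltr0n ?Lnorm_ge0 //.
  by apply: mean_ge0 => l; apply: powR_ge0.
rewrite -(mean_cst L_gt0 (M `^ q%:R)); apply: ler_mean => l.
by apply: ge0_ler_powR; rewrite ?nnegrE ?Lnorm_ge0 //; apply: le_bigmax.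
Qed.

Lemma Lnorm_mono k m f : ext_pos k -> ext_le k m -> Lnorm k f <= Lnorm m f.
Proof.
case: m => [m|] k_gt0 km; last exact: Lnorm_le_max.
case: k k_gt0 km => [k|] // k_gt0 km; rewrite /= in k_gt0 km.
have k0 : 0 < k%:R :> R by rewrite ltr0n.
rewrite !Lnorm_finE; apply: ler_powRV => //.
- by apply: mean_ge0 => l; apply: powR_ge0.
- exact: powR_ge0.
by rewrite -powRdivE power_mean_le // ler_nat.
Qed.

Lemma Lnorm_mul_max q u v : ext_pos q ->
  Lnorm q (fun l => u l * v l) <= Lnorm q u * Lnorm None v.
Proof.
have M0 := Lnorm_ge0 None v; set M := Lnorm None v in M0 *.
have v_le l : `|v l| <= M by apply: le_bigmax.
case: q => [q|] q_gt0; last first.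
  apply: bigmax_le => [|l _]; first by rewrite mulr_ge0 ?Lnorm_ge0.
  by rewrite normrM ler_pM // le_bigmax.
have q0 : 0 < q%:R :> R by rewrite ltr0n.
rewrite !Lnorm_finE; apply: ler_powRV => //.
- by apply: mean_ge0 => l; apply: powR_ge0.
- by rewrite mulr_ge0 ?powR_ge0.
rewrite powRM ?powR_ge0 // powRVK ?gt_eqF ?mean_ge0 // => [|l]; last exact: powR_ge0.
rewrite mulrC -meanZ; apply: ler_mean => l.
rewrite normrM powRM // [leRHS]mulrC; apply: ler_wpM2l; first exact: powR_ge0.
by apply: ge0_ler_powR; rewrite ?nnegrE.
Qed.

Lemma Lnorm_holder_fin (k r m : nat) u v : (0 < k)%N -> (0 < r)%N -> (0 < m)%N ->
  r%:R^-1 <= k%:R^-1 - m%:R^-1 :> R ->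
  Lnorm (Some k) (fun l => u l * v l) <= Lnorm (Some m) u * Lnorm (Some r) v.
Proof.
move=> k_gt0 r_gt0 m_gt0 krm.
have [k0 r0 m0] : [/\ 0 < k%:R :> R, 0 < r%:R :> R & 0 < m%:R :> R].
  by split; rewrite ltr0n.
have krm1 : k%:R / m%:R + k%:R / r%:R <= 1 :> R.
  rewrite -mulrDr -[leRHS](mulfV (lt0r_neq0 k0)); apply: ler_wpM2l.
  - exact: ltW.
  - by rewrite addrC -lerBrDr.
rewrite !Lnorm_finE; apply: ler_powRV => //.
- by apply: mean_ge0 => l; apply: powR_ge0.
- by rewrite mulr_ge0 ?powR_ge0.
have uvE l : `|u l * v l| `^ k%:R = `|u l| `^ k%:R * `|v l| `^ k%:R.
  by rewrite normrM powRM.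
rewrite (eq_mean uvE).
apply: le_trans (holder_mean L_gt0 (fun l => normr_ge0 (u l)) (fun l => normr_ge0 (v l))
  k0 m0 r0 krm1) _.
by rewrite !powRdivE [leRHS](powRM _ (powR_ge0 _ _) (powR_ge0 _ _)).
Qed.

Lemma Lnorm_holder_max k r u v : ext_pos k -> ext_le k r ->
  Lnorm k (fun l => u l * v l) <= Lnorm r u * Lnorm None v.
Proof.
move=> k_gt0 kr; apply: le_trans (Lnorm_mul_max _ _ k_gt0) _.
by rewrite ler_wpM2r ?Lnorm_ge0 ?Lnorm_mono.
Qed.

Lemma Lnorm_holder k r m u v : ext_pos k -> ext_pos r -> ext_pos m ->
  holder_exps R k r m ->
  Lnorm k (fun l => u l * v l) <= Lnorm m u * Lnorm r v.
Proof.
move=> k_gt0 r_gt0 m_gt0 [[km krm]|[kr [r_eq m_eq]]]; last first.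
  by subst r m; exact: (Lnorm_holder_max u v k_gt0 kr).
case: m m_gt0 km krm => [m|] m_gt0 km krm.
  case: k k_gt0 km krm => [k|] // k_gt0 km krm.
  case: r r_gt0 krm => [r|] r_gt0 krm.
    exact: (Lnorm_holder_fin u v k_gt0 r_gt0 m_gt0 krm).
  exact: (Lnorm_holder_max u v k_gt0 km).
case: r r_gt0 krm => [r|] r_gt0 krm; last exact: (Lnorm_holder_max u v k_gt0 km).
(* [m] infinite and [r] finite: then [k <= r], and the roles of [u] and [v] swap. *)
case: k k_gt0 km krm => [k|] k_gt0 _ krm; rewrite /= subr0 in krm; last first.
  by move: krm; rewrite leNgt invr_gt0 ltr0n r_gt0.
move: krm; rewrite lef_pV2 ?posrE ?ltr0n // ler_nat => kr.
rewrite mulrC (eq_Lnorm _ (fun l => mulrC (u l) (v l) : u l * v l = v l * u l)).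
exact: (@Lnorm_holder_max (Some k) (Some r) v u k_gt0 kr).
Qed.

End NormalizedNorm.

Section Occurrences.
Variable A : finType.
Implicit Types (Y : int -> A) (s : seq A).

Lemma occurs_rcons Y s a t :
  occurs Y (rcons s a) t = occurs Y s (t - 1) && (Y t == a).
Proof.
rewrite /occurs size_rcons -addn1 iotaD map_cat /= cats1 eqseq_rcons add0n PoszD.
congr (_ && (Y _ == a)); last by ring.
by congr (_ == s); apply: eq_map => j; congr Y; ring.
Qed.

Lemma sum_count_fiber (T : Type) (r : seq T) (P : pred T) (g : T -> A) :
  (\sum_a count (fun t => P t && (g t == a)) r = count P r)%N.
Proof.
elim: r => [|t r IHr]; first by rewrite big1.
rewrite /= big_split /= IHr; congr (_ + _)%N; case: (P t) => /=; last by rewrite big1.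
by rewrite (bigD1 (g t)) //= eqxx big1 // => a /negbTE; rewrite eq_sym => ->.
Qed.

(* Occurrences of [s] are counted by the time [i] of the letter that follows. *)
Lemma Ncount_next Y s n : (0 < n)%N ->
  Ncount Y n.-1 (inl s) =
  count (fun i : nat => occurs Y s (i%:Z - 1)) (index_iota (size s).+1 n.+1).
Proof.
move=> n_gt0; rewrite /= /index_iota prednK // subSS -add1n iotaDl count_map.
by apply: eq_count => t /=; rewrite addnC PoszD addrK.
Qed.

Lemma sum_Ncount_app Y s n : (0 < n)%N ->
  (\sum_a Ncount Y n (str_app (inl s) a) = Ncount Y n.-1 (inl s))%N.
Proof.
move=> n_gt0; rewrite Ncount_next // -(sum_count_fiber _ _ (fun t : nat => Y t)).
apply: eq_bigr => a _; rewrite /= size_rcons.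
by apply: eq_count => t; exact: occurs_rcons.
Qed.

End Occurrences.

Lemma sum_natr_count (R : nzSemiRingType) (T : Type) (r : seq T) (P : pred T) :
  \sum_(t <- r) (P t)%:R = (count P r)%:R :> R.
Proof. by elim: r => [|t r IHr]; rewrite ?big_nil // big_cons IHr natrD. Qed.

Section Estimators.
Variables (R : realType) (A : finType) (L : nat) (X : 'I_L -> int -> A) (n : nat).
Hypothesis n_gt0 : (0 < n)%N.

Lemma unif_distr : (0 < #|A|)%N -> is_distr (unif R A).
Proof.
move=> A_gt0; split => [a|]; first by rewrite ffunE invr_ge0 ler0n.
under eq_bigr do rewrite ffunE.
rewrite sumr_const -[_ *+ _]mulr_natl (_ : #|xpredT| = #|A|) //.
by rewrite mulfV // pnatr_eq0 -lt0n.
Qed.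

Lemma phat_distr w l : allpos X n w -> is_distr (phat R X n w l).
Proof.
case: w => [s|x] Npos; last by have := forallP Npos l.
have N_gt0 := forallP Npos l; rewrite /phat Npos.
split=> [a|]; first by rewrite ffunE divr_ge0.
under eq_bigr do rewrite ffunE.
by rewrite -mulr_suml -natr_sum sum_Ncount_app // mulfV // pnatr_eq0 -lt0n.
Qed.

Lemma pbar_distr (p : 'I_L -> (nat -> A) -> A -> R) w l :
  (forall l x, is_distr [ffun a => p l x a]) ->
  allpos X n w -> is_distr (pbar X p n w l).
Proof.
move=> p_distr; case: w => [s|x] Npos; last by have := forallP Npos l.
have N_gt0 := forallP Npos l; rewrite /pbar Npos.
have p_ge0 x a : 0 <= p l x a by have [+ _] := p_distr l x => /(_ a); rewrite ffunE.
have p_sum1 x : \sum_a p l x a = 1.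
  by have [_ <-] := p_distr l x; apply: eq_bigr => a _; rewrite ffunE.
split=> [a|].
  rewrite ffunE mulr_ge0 ?invr_ge0 ?ler0n ?sumr_ge0 // => i _.
  by rewrite mulr_ge0 ?ler0n.
under eq_bigr do rewrite ffunE.
rewrite -mulr_sumr exchange_big /=.
under eq_bigr do rewrite -mulr_sumr p_sum1 mulr1.
by rewrite sum_natr_count addn1 -Ncount_next // mulVf // pnatr_eq0 -lt0n.
Qed.

End Estimators.

Theorem theorem3p1 (R : realType) (A : finType) (L n : nat)
  (X : 'I_L -> int -> A) (p : 'I_L -> (nat -> A) -> A -> R)
  (d : 'I_L -> {ffun A -> R} -> {ffun A -> R} -> R)
  (conf : str A -> 'I_L -> R) (k r m : option nat) :
  (0 < #|A|)%N -> (0 < L)%N -> (0 < n)%N ->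
  (forall l x, is_distr [ffun a => p l x a]) ->
  (forall l, is_metric01 (d l)) ->
  (forall w l, 0 <= conf w l <= 1) ->
  (forall w w' l, str_suffix w w' -> conf w l <= conf w' l) ->
  ext_pos k -> ext_pos r -> ext_pos m ->
  holder_exps R k r m ->
  Good X p d conf n m ->
  forall w : str A,
    Lnorm k (fun l => d l (phat R X n w l) (pbar X p n w l))
      <= Lnorm r (fun l => conf w l).
Proof.
move=> A_gt0 L_gt0 n_gt0 p_distr d_metric _ _ k_gt0 r_gt0 m_gt0 krm good w.
set D := fun l => d l (phat R X n w l) (pbar X p n w l).
have [Npos|Nneg] := boolP (allpos X n w); last first.
  have D0 l : D l = 0.
    have [_ [d_eq0 _]] := d_metric l; have U := unif_distr R A_gt0.
    by rewrite /D /phat /pbar (negbTE Nneg); apply/(d_eq0 _ _ U U).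
  by rewrite (eq_Lnorm _ D0) Lnorm0 //; apply: Lnorm_ge0.
have [conf0 ratio_le1] := good w Npos.
have D_sym l : D l = d l (pbar X p n w l) (phat R X n w l).
  have [_ [_ [d_sym _]]] := d_metric l.
  by apply: d_sym; [exact: phat_distr | exact: pbar_distr].
have D_ratio l : D l = D l / conf w l * conf w l.
  have [c0|c_neq0] := eqVneq (conf w l) 0; last by rewrite divfK.
  by rewrite c0 mulr0 D_sym conf0.
rewrite (eq_Lnorm _ D_ratio).
apply: le_trans (Lnorm_holder L_gt0 _ _ k_gt0 r_gt0 m_gt0 krm) _.
apply: ler_piMl; first exact: Lnorm_ge0.
by under eq_Lnorm do rewrite D_sym.
Qed.
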